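(* Let $W$ be a discrete memoryless channel with input alphabet $\mathbb{F}_q$ and let $m\ge1$. Then $C_{KV}(W^{\otimes m})=C_{KV}(W)^m$. In particular, if $C_{KV}(W)=1-\epsilon$ then $C_{KV}(W^{\otimes m})\ge1-m\epsilon$.
   Context: For memoryless channels $W$ (input $\mathcal{X}$, output $\mathcal{Y}$) and $W'$ (input $\mathcal{X}'$, output $\mathcal{Y}'$), the tensor product $W\otimes W'$ has input $\mathcal{X}\times\mathcal{X}'$, output $\mathcal{Y}\times\mathcal{Y}'$ and transition probabilities $(W\otimes W')(y,y'|x,x')=W(y|x)W'(y'|x')$; $W^{\otimes m}=W\otimes\cdots\otimes W$ ($m$ factors), with input alphabet $\mathbb{F}_q^m$ (identified with $\mathbb{F}_{q^m}$). For a channel with finite input alphabet $A$ and input uniformly distributed on $A$, the APP vector of output $y$ is $\pi_y=(\mathrm{prob}(\text{input}=a|y))_{a\in A}$ and the Koetter–Vardy capacity is $C_{KV}=\mathbb{E}(\sum_a\pi_y(a)^2)$, the expectation being over the channel output. *)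

From HB Require Import structures.
From mathcomp Require Import all_boot all_order all_algebra.
Set Implicit Arguments. Unset Strict Implicit. Unset Printing Implicit Defensive.
Import Order.TTheory GRing.Theory Num.Theory.
Local Open Scope ring_scope.

(* A discrete memoryless channel with finite input alphabet A and finite
   output alphabet Y: W a y = W(y|a). *)
Definition is_channel (R : realFieldType) (A Y : finType) (W : A -> Y -> R) : Prop :=
  (forall a y, 0 <= W a y) /\ (forall a, \sum_(y : Y) W a y = 1).

Definition out_prob (R : realFieldType) (A Y : finType) (W : A -> Y -> R) (y : Y) : R :=
  (#|A|%:R)^-1 * \sum_(a : A) W a y.

(* APP vector: prob(input = a | y) = (W(y|a)/|A|) / P(y) = W(y|a) / sum_x W(y|x).
   (For P(y) = 0 this is 0 by MathComp's x/0 = 0 convention; such y carry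
   weight 0 in the expectation.) *)
Definition app (R : realFieldType) (A Y : finType) (W : A -> Y -> R) (y : Y) (a : A) : R :=
  W a y / \sum_(x : A) W x y.

Definition C_KV (R : realFieldType) (A Y : finType) (W : A -> Y -> R) : R :=
  \sum_(y : Y) out_prob W y * \sum_(a : A) app W y a ^+ 2.

Definition tensor_pow (R : realFieldType) (A Y : finType) (m : nat) (W : A -> Y -> R)
  : {ffun 'I_m -> A} -> {ffun 'I_m -> Y} -> R :=
  fun x y => \prod_(i < m) W (x i) (y i).
Arguments tensor_pow {R A Y} m W _ _.

(* With uniform input, C_KV W = |A|^-1 * sum_y r(y) where
   r(y) = (sum_a W(y|a)^2) / (sum_a W(y|a)) (app_ratio below).  For the
   tensor power both sums in r factor over the coordinates of the output
   word, so r is multiplicative, and summing a product over all words gives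
   the m-th power of the single-letter sum.  The bound then follows from Bernoulli's
   inequality, applicable since C_KV W >= 0 forces eps <= 1. *)
From HB Require Import structures.
From mathcomp Require Import all_boot all_order all_algebra.
From mathcomp Require Import ring lra.

Set Implicit Arguments.
Unset Strict Implicit.
Unset Printing Implicit Defensive.
Import Order.TTheory GRing.Theory Num.Theory.
Local Open Scope ring_scope.

Section KoetterVardy.

Variables (R : realFieldType) (A Y : finType).
Implicit Type W : A -> Y -> R.

Definition app_ratio W (y : Y) : R :=
  (\sum_(a : A) W a y ^+ 2) / \sum_(a : A) W a y.

Lemma C_KVE W :
  C_KV W = #|A|%:R^-1 * \sum_(y : Y) app_ratio W y.
Proof.
rewrite /C_KV /out_prob mulr_sumr; apply: eq_bigr => y _.
rewrite -mulrA /app_ratio /app; congr (_ * _).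
set S := \sum_(x : A) W x y.
under eq_bigr do rewrite exprMn.
rewrite -mulr_suml.
have [->|S_neq0] := eqVneq S 0; first by rewrite !mul0r invr0 mulr0.
by rewrite expr2; field.
Qed.

Lemma app_ratio_ge0 W :
  (forall a y, 0 <= W a y) -> forall y, 0 <= app_ratio W y.
Proof.
move=> W_ge0 y; apply: divr_ge0; apply: sumr_ge0 => a _ //.
exact: sqr_ge0.
Qed.

Lemma C_KV_ge0 W : is_channel W -> 0 <= C_KV W.
Proof.
move=> [W_ge0 _]; rewrite C_KVE mulr_ge0 ?invr_ge0 //.
by apply: sumr_ge0 => y _; apply: app_ratio_ge0.
Qed.

End KoetterVardy.

Lemma app_ratio_tensor_pow (R : realFieldType) (A Y : finType) (m : nat)
  (W : A -> Y -> R) (y : {ffun 'I_m -> Y}) :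
  app_ratio (tensor_pow m W) y = \prod_(i < m) app_ratio W (y i).
Proof.
rewrite /app_ratio /tensor_pow.
under eq_bigr do rewrite -prodrXl.
rewrite -(bigA_distr_bigA (fun i a => W a (y i) ^+ 2)).
rewrite -(bigA_distr_bigA (fun i a => W a (y i))).
by rewrite big_split /= prodfV.
Qed.

Lemma C_KV_tensor_pow (R : realFieldType) (A Y : finType) (m : nat) (W : A -> Y -> R) :
  C_KV (tensor_pow m W) = C_KV W ^+ m.
Proof.
rewrite !C_KVE card_ffun card_ord natrX exprMn exprVn.
under eq_bigr do rewrite app_ratio_tensor_pow.
by rewrite -(bigA_distr_bigA (fun _ : 'I_m => app_ratio W)) prodr_const card_ord.
Qed.

Lemma bernoulli_ineq (R : realFieldType) (x : R) (n : nat) :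
  -1 <= x -> 1 + n%:R * x <= (1 + x) ^+ n.
Proof.
move=> x_ge_m1; elim: n => [|n IHn]; first by rewrite mul0r addr0 expr0.
have x1_ge0 : 0 <= 1 + x by lra.
rewrite exprSr; apply: le_trans (ler_wpM2r x1_ge0 IHn).
have nxx_ge0 : 0 <= n%:R * x ^+ 2 by rewrite mulr_ge0 ?sqr_ge0.
rewrite -natr1; nra.
Qed.

Theorem proposition5 (R : realFieldType) (F : finFieldType) (Y : finType)
  (W : F -> Y -> R) (m : nat) :
  is_channel W -> (1 <= m)%N ->
  C_KV (tensor_pow m W) = C_KV W ^+ m /\
  (forall eps : R, C_KV W = 1 - eps -> 1 - m%:R * eps <= C_KV (tensor_pow m W)).
Proof.
move=> chW _; split; first exact: C_KV_tensor_pow.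
move=> eps C_KV_eq; rewrite C_KV_tensor_pow C_KV_eq.
have eps_le1 : eps <= 1 by have := C_KV_ge0 chW; rewrite C_KV_eq; lra.
have := @bernoulli_ineq R (- eps) m; rewrite mulrN; apply; lra.
Qed.
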